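(* Let $M(t)\in\mathbb{R}^{n\times n}$ be symmetric and satisfy $\dot M=-(M\Phi+\Phi M)$ with $\Phi(t)$ symmetric, and suppose $M(t)=\sum_e\lambda_e(t)E_e(t)$ with distinct eigenvalues $\lambda_e(t)$ and orthogonal spectral projectors $E_e(t)$ varying differentiably (ranks constant). Then for each $e$, $$\dot\lambda_e=-2\lambda_e\,\frac{\operatorname{tr}(E_e\Phi E_e)}{\dim(E_e)},$$ where $\dim(E_e)=\operatorname{tr}(E_e)$ is the rank of $E_e$. *)

From HB Require Import structures.
From mathcomp Require Export all_boot all_order all_algebra.
From mathcomp Require Export all_classical all_reals all_analysis.
Export Order.TTheory GRing.Theory Num.Theory.

(* With M E_e = E_e M = lam_e E_e and E_e idempotent, lam_e = tr (E_e M) / rank E_e,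
   and the rank is constant.  Differentiating, tr (E_e' M) = 0: differentiating
   E_e^2 = E_e gives E_e' = E_e' E_e + E_e E_e', hence E_e E_e' E_e = 0.  What is left
   is tr (E_e M') = - tr (E_e (M Phi + Phi M)) = - 2 lam_e tr (E_e Phi E_e). *)

From mathcomp Require Import ring.
Local Open Scope ring_scope.

Lemma mxtrace_pid_mx (R : pzRingType) n r :
  (r <= n)%N -> \tr (pid_mx r : 'M[R]_n) = r%:R.
Proof.
move=> le_rn; rewrite /mxtrace (eq_bigr (fun i : 'I_n => if (i < r)%N then 1 else 0)).
  by rewrite -big_mkcond -(big_ord_widen _ (fun=> 1) le_rn) sumr_const card_ord.
by move=> i _; rewrite mxE eqxx; case: (i < r)%N.
Qed.

(* Write A = L *m pid_mx r *m U with L, U invertible: idempotence of A makes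
   pid_mx r *m (U *m L) *m pid_mx r = pid_mx r, and the trace is invariant under
   the cyclic permutation L *m pid_mx r *m U ~> pid_mx r *m U *m L. *)
Lemma mxtrace_idem (F : fieldType) n (A : 'M[F]_n) :
  A *m A = A -> \tr A = (\rank A)%:R.
Proof.
move=> idemA; have defA := mulmx_ebase A.
set L := col_ebase A in defA; set U := row_ebase A in defA.
set P := pid_mx (\rank A) in defA.
have idemP : P *m P = P by rewrite pid_mx_id // rank_leq_row.
have PULP : P *m (U *m L) *m P = P.
  have : L *m (P *m (U *m L) *m P) *m U = L *m P *m U.
    by rewrite defA -idemA -defA !mulmxA.
  move/(congr1 (fun X => invmx L *m (X *m invmx U))).
  by rewrite /= !mulmxK ?row_ebase_unit // !mulKmx ?col_ebase_unit.
have -> : \tr A = \tr (P *m (U *m L) *m P).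
  rewrite -[in LHS]defA -mulmxA mxtrace_mulC.
  by rewrite [RHS]mxtrace_mulC mulmxA idemP mulmxA.
by rewrite PULP mxtrace_pid_mx // rank_leq_row.
Qed.

Lemma eigenprojector_mxtrace {F : numFieldType} {n} {P A : 'M[F]_n} {c} :
  P *m P = P -> P != 0 -> P *m A = c *: P -> c = \tr (P *m A) / (\rank P)%:R.
Proof.
move=> idemP P_neq0 PA.
by rewrite PA mxtraceZ mxtrace_idem // mulfK // pnatr_eq0 mxrank_eq0.
Qed.

Section SpectralProjector.
Context {R : comPzRingType} {n : nat} {P A : 'M[R]_n} {c : R}.
Hypotheses (idemP : P *m P = P) (PA : P *m A = c *: P) (AP : A *m P = c *: P).

Lemma mxtrace_idem_conj (B : 'M[R]_n) : \tr (P *m B *m P) = \tr (P *m B).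
Proof. by rewrite mxtrace_mulC mulmxA idemP. Qed.

(* D plays the role of the derivative of a path of idempotents through P. *)
Lemma idem_tangent_conj {D : 'M[R]_n} : D = D *m P + P *m D -> P *m D *m P = 0.
Proof.
move=> defD; apply: (@addrI _ (P *m D *m P)); rewrite addr0 [in RHS]defD.
by rewrite mulmxDr mulmxDl !mulmxA idemP -(mulmxA _ P P) idemP.
Qed.

Lemma mxtrace_idem_tangent_mul {D : 'M[R]_n} :
  D = D *m P + P *m D -> \tr (D *m A) = 0.
Proof.
move=> defD; have trDP : \tr (D *m P) = 0.
  by rewrite -idemP mulmxA mxtrace_mulC mulmxA idem_tangent_conj ?mxtrace0.
rewrite defD mulmxDl mxtraceD -!mulmxA PA [\tr (P *m _)]mxtrace_mulC -mulmxA AP.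
by rewrite -scalemxAr mxtraceZ trDP mulr0 addr0.
Qed.

Lemma mxtrace_idem_anticomm (B : 'M[R]_n) :
  \tr (P *m (A *m B + B *m A)) = c *+ 2 * \tr (P *m B *m P).
Proof.
rewrite mxtrace_idem_conj mulmxDr mxtraceD mulmxA PA -scalemxAl mxtraceZ.
rewrite [\tr (P *m (B *m A))]mxtrace_mulC -mulmxA AP -scalemxAr mxtraceZ.
by rewrite [\tr (B *m P)]mxtrace_mulC mulr2n mulrDl.
Qed.

End SpectralProjector.

Section SpectralDecomposition.
Context {R : comPzRingType} {n k : nat} {lam : 'I_k -> R} {E : 'I_k -> 'M[R]_n}.
Hypotheses (idemE : forall e, E e *m E e = E e)
           (orthE : forall e f, e != f -> E e *m E f = 0).

Lemma mulmx_proj_spectral e : E e *m (\sum_f lam f *: E f) = lam e *: E e.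
Proof.
rewrite mulmx_sumr (bigD1 e) //= -scalemxAr idemE big1 ?addr0 // => f fe.
by rewrite -scalemxAr orthE ?scaler0 // eq_sym.
Qed.

Lemma mulmx_spectral_proj e : (\sum_f lam f *: E f) *m E e = lam e *: E e.
Proof.
rewrite mulmx_suml (bigD1 e) //= -scalemxAl idemE big1 ?addr0 // => f fe.
by rewrite -scalemxAl orthE ?scaler0.
Qed.

End SpectralDecomposition.

Section MatrixDerivative.
Context {R : realType} {n : nat}.

Definition mx_is_derive (A : R -> 'M[R]_n) (t : R) (dA : 'M[R]_n) :=
  forall i j, is_derive t (1 : R) (fun s => A s i j) (dA i j).

Lemma mx_is_deriveP {A : R -> 'M[R]_n} {t} :
  (forall i j, derivable (fun s => A s i j) t 1) ->
  mx_is_derive A t (\matrix_(i, j) derive1 (fun s => A s i j) t).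
Proof. by move=> dA i j; rewrite mxE derive1E; exact: derivableP. Qed.

Lemma mx_is_derive_mul {A B : R -> 'M[R]_n} {t dA dB} :
  mx_is_derive A t dA -> mx_is_derive B t dB ->
  mx_is_derive (fun s => A s *m B s) t (dA *m B t + A t *m dB).
Proof.
rewrite /mx_is_derive => hA hB i j.
have -> : (fun s => (A s *m B s) i j) = \sum_l ((fun s => A s i l) * (fun s => B s l j)).
  by apply/funext => s; rewrite fct_sumE mxE.
apply: is_derive_eq; rewrite !mxE -big_split; apply: eq_bigr => l _.
by rewrite /GRing.scale /= addrC [dA i l * _]mulrC.
Qed.

Lemma mx_is_derive_trace {A : R -> 'M[R]_n} {t dA} :
  mx_is_derive A t dA -> is_derive t (1 : R) (fun s => \tr (A s)) (\tr dA).
Proof.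
move=> hA; have -> : (fun s => \tr (A s)) = \sum_l (fun s => A s l l).
  by apply/funext => s; rewrite fct_sumE.
exact: is_derive_sum.
Qed.

Lemma mx_is_derive_idem {P : R -> 'M[R]_n} {t dP} :
  (forall s, P s *m P s = P s) -> mx_is_derive P t dP ->
  dP = dP *m P t + P t *m dP.
Proof.
move=> idemP hP; apply/matrixP => i j.
have := mx_is_derive_mul hP hP i j.
under eq_fun do rewrite idemP.
move=> hPP; rewrite -(derive_val (is_derive := hPP)).
by rewrite (derive_val (is_derive := hP i j)).
Qed.

End MatrixDerivative.

Theorem corollary8 (R : realType) (n k : nat)
  (M Phi : R -> 'M[R]_n) (lam : 'I_k -> R -> R) (E : 'I_k -> R -> 'M[R]_n) :
  (forall t, (M t)^T = M t) ->
  (forall t, (Phi t)^T = Phi t) ->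
  (forall t (i j : 'I_n), derivable (fun s => M s i j) t 1) ->
  (forall t (i j : 'I_n),
      derive1 (fun s => M s i j) t = (- (M t *m Phi t + Phi t *m M t)) i j) ->
  (* spectral decomposition with distinct eigenvalues *)
  (forall t, M t = \sum_(e < k) lam e t *: E e t) ->
  (forall t (e f : 'I_k), e != f -> lam e t != lam f t) ->
  (* orthogonal spectral projectors (nonzero, resolving the identity) *)
  (forall t e, (E e t)^T = E e t) ->
  (forall t e, E e t *m E e t = E e t) ->
  (forall t (e f : 'I_k), e != f -> E e t *m E f t = 0) ->
  (forall t, \sum_(e < k) E e t = 1%:M) ->
  (forall t e, E e t != 0) ->
  (* projectors vary differentiably, with constant ranks *)
  (forall e t (i j : 'I_n), derivable (fun s => E e s i j) t 1) ->
  (forall e t s, \rank (E e t) = \rank (E e s)) ->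
  forall (e : 'I_k) (t : R),
    derivable (lam e) t 1 /\
    derive1 (lam e) t = - 2 * lam e t * (\tr (E e t *m Phi t *m E e t) / (\rank (E e t))%:R).
Proof.
move=> _ _ M_ex M_eq defM _ _ idemE orthE _ E_neq0 E_ex E_rank e t.
set r : R := (\rank (E e t))%:R.
have EM s : E e s *m M s = lam e s *: E e s.
  by rewrite defM (mulmx_proj_spectral (idemE s) (orthE s)).
have ME s : M s *m E e s = lam e s *: E e s.
  by rewrite defM (mulmx_spectral_proj (idemE s) (orthE s)).
have lamE : r^-1 \*: (fun s => \tr (E e s *m M s)) = lam e.
  apply/funext => s; rewrite (eigenprojector_mxtrace (idemE s e) (E_neq0 s e) (EM s)).
  by rewrite (E_rank e s t) /GRing.scale /= mulrC.
have hE := mx_is_deriveP (E_ex e t).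
have hM : mx_is_derive M t (- (M t *m Phi t + Phi t *m M t)).
  by move=> i j; apply: DeriveDef; [exact: M_ex | rewrite -derive1E M_eq].
have := is_deriveZ r^-1 (mx_is_derive_trace (mx_is_derive_mul hE hM)).
rewrite lamE => hlam; split; first exact: ex_derive.
rewrite derive1E (derive_val (is_derive := hlam)) mxtraceD.
rewrite (mxtrace_idem_tangent_mul (idemE t e) (EM t) (ME t)) ?add0r; last first.
  exact: mx_is_derive_idem (idemE ^~ e) hE.
rewrite mulmxN raddfN /= (mxtrace_idem_anticomm (idemE t e) (EM t) (ME t)) mulr2n.
by rewrite /GRing.scale /=; ring.
Qed.
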